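(* Let $m_1,m_2,n_1\in\mathbb Z_+$. Then $$|\mathcal S(m_1,m_2,n_1)|=|\mathcal S(m_1-1,m_2,n_1-1)|+|{}^1\mathcal S(m_1+1,m_2-1,n_1-1)|+|{}^2\mathcal S(m_1-1,m_2,n_1-1)|+|{}^3\mathcal S(m_1,m_2,n_1)|,$$ where $|{}^1\mathcal S|:=|R^1|+|R^2|$, $|{}^2\mathcal S|:=|Q^1|+|Q^2|$, $|{}^3\mathcal S|:=|U^1|+|U^2|$ (all evaluated at the same parameters).
   Context: (Type $G_2$ with $\mu(h_2)=0$: here $m_i=\lambda(h_i)$, $n_1=\mu(h_1)$, and $\mathcal S(m_1,m_2,n_1)$ is the lattice point set $\mathcal S^G_{\lambda,\mu}$ of the paper's polytope with $n_2=0$.) For arbitrary integers $m_1,m_2,n_1$ define: $\mathcal S(m_1,m_2,n_1)=\{(a,b,c,d,e,f)\in\mathbb Z_+^6: a\le\min\{m_1,n_1\},\ b\le m_2,\ f\le\min\{m_2,0\},\ b+e-a\le m_2,\ a+c+d\le\min\{m_1+m_2,n_1\},\ a+b+c\le\min\{m_1+m_2,n_1\},\ a+b+c+d\le\min\{m_1+2m_2,n_1\},\ b+c+d+e\le\min\{m_1+2m_2,n_1\},\ 2(a+c)+3d-b\le m_1+n_1,\ 2(a+c)+b+d\le m_1+n_1\}$; $R^1(m_1,m_2,n_1)=\{(b,c,d,e)\in\mathbb Z_+^4: b+e\le m_2,\ c+d\le m_1+m_2,\ b+c\le m_1+m_2,\ b+c+d+e\le n_1,\ 2c+3d-b\le m_1+n_1,\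 b+2c+d\le m_1+n_1\}$; $R^2(m_1,m_2,n_1)=\{(a,b,c,d)\in\mathbb Z_+^4: a<m_1,\ b\le m_2,\ a+c+d<m_1+m_2,\ a+b+c<m_1+m_2,\ a+b+c+d<n_1,\ 2a+2c+3d-b<m_1+n_1-1,\ 2a+b+2c+d<m_1+n_1-1\}$; $Q^1(m_1,m_2,n_1)=\{(a,c,d)\in\mathbb Z_+^3: a\le m_1,\ a+c+d\le\min\{m_1+m_2,n_1\},\ 2(a+c)+3d\le m_1+n_1\}$; $Q^2(m_1,m_2,n_1)=\{(a,b,c)\in\mathbb Z_+^3: a\le m_1,\ a+b+c\le\min\{m_1+m_2-1,n_1-1\},\ b\le m_2-1,\ 2(a+c)+b\le m_1+n_1-1\}$; $U^1(m_1,m_2,n_1)=\{(c,d)\in\mathbb Z_+^2: c+d\le\min\{m_1+m_2,n_1\},\ 2c+3d\le m_1+n_1\}$; $U^2(m_1,m_2,n_1)=\{(b,c)\in\mathbb Z_+^2: b+c<\min\{m_1+m_2,n_1\},\ b<m_2,\ 2c+b<m_1+n_1\}$. *)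

(* Parameters are integers (they may become negative,
   e.g. m1 - 1 with m1 = 0); points are tuples of natural numbers (Z_+). *)
From mathcomp Require Import all_boot all_order all_algebra.
Set Implicit Arguments. Unset Strict Implicit. Unset Printing Implicit Defensive.
Import Order.TTheory GRing.Theory Num.Theory.
Local Open Scope ring_scope.

Definition inS (m1 m2 n1 : int) (a b c d e f : nat) : bool :=
  [&& (a%:Z <= Num.min m1 n1), (b%:Z <= m2), (f%:Z <= Num.min m2 0),
      (b%:Z + e%:Z - a%:Z <= m2),
      (a%:Z + c%:Z + d%:Z <= Num.min (m1 + m2) n1),
      (a%:Z + b%:Z + c%:Z <= Num.min (m1 + m2) n1),
      (a%:Z + b%:Z + c%:Z + d%:Z <= Num.min (m1 + 2 * m2) n1),
      (b%:Z + c%:Z + d%:Z + e%:Z <= Num.min (m1 + 2 * m2) n1),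
      (2 * (a%:Z + c%:Z) + 3 * d%:Z - b%:Z <= m1 + n1) &
      (2 * (a%:Z + c%:Z) + b%:Z + d%:Z <= m1 + n1)].

Definition inR1 (m1 m2 n1 : int) (b c d e : nat) : bool :=
  [&& (b%:Z + e%:Z <= m2), (c%:Z + d%:Z <= m1 + m2), (b%:Z + c%:Z <= m1 + m2),
      (b%:Z + c%:Z + d%:Z + e%:Z <= n1),
      (2 * c%:Z + 3 * d%:Z - b%:Z <= m1 + n1) &
      (b%:Z + 2 * c%:Z + d%:Z <= m1 + n1)].

Definition inR2 (m1 m2 n1 : int) (a b c d : nat) : bool :=
  [&& (a%:Z < m1), (b%:Z <= m2), (a%:Z + c%:Z + d%:Z < m1 + m2),
      (a%:Z + b%:Z + c%:Z < m1 + m2), (a%:Z + b%:Z + c%:Z + d%:Z < n1),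
      (2 * a%:Z + 2 * c%:Z + 3 * d%:Z - b%:Z < m1 + n1 - 1) &
      (2 * a%:Z + b%:Z + 2 * c%:Z + d%:Z < m1 + n1 - 1)].

Definition inQ1 (m1 m2 n1 : int) (a c d : nat) : bool :=
  [&& (a%:Z <= m1), (a%:Z + c%:Z + d%:Z <= Num.min (m1 + m2) n1) &
      (2 * (a%:Z + c%:Z) + 3 * d%:Z <= m1 + n1)].

Definition inQ2 (m1 m2 n1 : int) (a b c : nat) : bool :=
  [&& (a%:Z <= m1), (a%:Z + b%:Z + c%:Z <= Num.min (m1 + m2 - 1) (n1 - 1)),
      (b%:Z <= m2 - 1) & (2 * (a%:Z + c%:Z) + b%:Z <= m1 + n1 - 1)].

Definition inU1 (m1 m2 n1 : int) (c d : nat) : bool :=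
  (c%:Z + d%:Z <= Num.min (m1 + m2) n1) && (2 * c%:Z + 3 * d%:Z <= m1 + n1).

Definition inU2 (m1 m2 n1 : int) (b c : nat) : bool :=
  [&& (b%:Z + c%:Z < Num.min (m1 + m2) n1), (b%:Z < m2) &
      (2 * c%:Z + b%:Z < m1 + n1)].

(* A box 'I_(bnd) in each coordinate that contains all points of every
   set above (see the lemmas inS_bound, ... below). *)
Definition bnd (m1 m2 n1 : int) : nat :=
  (`|m1| + `|m2| + `|n1| + 1)%N.

Definition cardS (m1 m2 n1 : int) : nat :=
  (\sum_(a < bnd m1 m2 n1) \sum_(b < bnd m1 m2 n1) \sum_(c < bnd m1 m2 n1)
   \sum_(d < bnd m1 m2 n1) \sum_(e < bnd m1 m2 n1) \sum_(f < bnd m1 m2 n1)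
     inS m1 m2 n1 a b c d e f)%N.
Definition cardR1 (m1 m2 n1 : int) : nat :=
  (\sum_(b < bnd m1 m2 n1) \sum_(c < bnd m1 m2 n1) \sum_(d < bnd m1 m2 n1)
   \sum_(e < bnd m1 m2 n1) inR1 m1 m2 n1 b c d e)%N.
Definition cardR2 (m1 m2 n1 : int) : nat :=
  (\sum_(a < bnd m1 m2 n1) \sum_(b < bnd m1 m2 n1) \sum_(c < bnd m1 m2 n1)
   \sum_(d < bnd m1 m2 n1) inR2 m1 m2 n1 a b c d)%N.
Definition cardQ1 (m1 m2 n1 : int) : nat :=
  (\sum_(a < bnd m1 m2 n1) \sum_(c < bnd m1 m2 n1) \sum_(d < bnd m1 m2 n1)
     inQ1 m1 m2 n1 a c d)%N.
Definition cardQ2 (m1 m2 n1 : int) : nat :=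
  (\sum_(a < bnd m1 m2 n1) \sum_(b < bnd m1 m2 n1) \sum_(c < bnd m1 m2 n1)
     inQ2 m1 m2 n1 a b c)%N.
Definition cardU1 (m1 m2 n1 : int) : nat :=
  (\sum_(c < bnd m1 m2 n1) \sum_(d < bnd m1 m2 n1) inU1 m1 m2 n1 c d)%N.
Definition cardU2 (m1 m2 n1 : int) : nat :=
  (\sum_(b < bnd m1 m2 n1) \sum_(c < bnd m1 m2 n1) inU2 m1 m2 n1 b c)%N.

Definition card1S m1 m2 n1 := (cardR1 m1 m2 n1 + cardR2 m1 m2 n1)%N.
Definition card2S m1 m2 n1 := (cardQ1 m1 m2 n1 + cardQ2 m1 m2 n1)%N.
Definition card3S m1 m2 n1 := (cardU1 m1 m2 n1 + cardU2 m1 m2 n1)%N.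

From Pilot Require Import Defs.
From mathcomp Require Import all_boot all_order all_algebra zify.
Import Order.TTheory GRing.Theory Num.Theory.
Local Open Scope ring_scope.

(* Since f <= min(m2, 0), every point of S has f = 0, so S is a set of
   5-tuples (a,b,c,d,e).  We split it according to whether e, a, b, d vanish:
     e > 0, a > 0           : shifting a, e down by one gives S(m1-1,m2,n1-1);
     e > 0, a = 0           : shifting e gives R^1(m1+1,m2-1,n1-1);
     e = 0, b > 0, d > 0    : shifting b, d gives R^2(m1+1,m2-1,n1-1);
     e = 0, a > 0, b = 0    : shifting a gives Q^1(m1-1,m2,n1-1);
     e = 0, a, b > 0, d = 0 : shifting a, b gives Q^2(m1-1,m2,n1-1);
     e = 0, a = 0, b = 0    : U^1(m1,m2,n1);
     e = 0, a = 0, b > 0, d = 0 : shifting b gives U^2(m1,m2,n1). *)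

Section BoxSums.
Local Open Scope nat_scope.

Definition box1 (N : nat) (F : nat -> nat) : nat := \sum_(i < N) F i.
Definition box2 N (F : nat -> nat -> nat) : nat := \sum_(i < N) box1 N (F i).
Definition box3 N (F : nat -> nat -> nat -> nat) : nat := \sum_(i < N) box2 N (F i).
Definition box4 N (F : nat -> nat -> nat -> nat -> nat) : nat :=
  \sum_(i < N) box3 N (F i).
Definition box5 N (F : nat -> nat -> nat -> nat -> nat -> nat) : nat :=
  \sum_(i < N) box4 N (F i).

Lemma eq_box2 N F G : (forall x y, F x y = G x y) -> box2 N F = box2 N G.
Proof. by move=> eqFG; apply: eq_bigr => x _; apply: eq_bigr => y _. Qed.
Lemma eq_box3 N F G : (forall x y z, F x y z = G x y z) -> box3 N F = box3 N G.
Proof. by move=> eqFG; apply: eq_bigr => x _; apply: eq_box2. Qed.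
Lemma eq_box4 N F G : (forall x y z w, F x y z w = G x y z w) -> box4 N F = box4 N G.
Proof. by move=> eqFG; apply: eq_bigr => x _; apply: eq_box3. Qed.
Lemma eq_box5 N F G : (forall x y z w v, F x y z w v = G x y z w v) ->
  box5 N F = box5 N G.
Proof. by move=> eqFG; apply: eq_bigr => x _; apply: eq_box4. Qed.

Lemma box2_eq0 N F : (forall x y, F x y = 0) -> box2 N F = 0.
Proof. by move=> F0; apply: big1 => x _; apply: big1 => y _. Qed.
Lemma box3_eq0 N F : (forall x y z, F x y z = 0) -> box3 N F = 0.
Proof. by move=> F0; apply: big1 => x _; apply: box2_eq0. Qed.
Lemma box4_eq0 N F : (forall x y z w, F x y z w = 0) -> box4 N F = 0.
Proof. by move=> F0; apply: big1 => x _; apply: box3_eq0. Qed.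

Lemma sum_widen {B N : nat} {F : nat -> nat} :
  B <= N -> (forall i, B <= i -> F i = 0) ->
  \sum_(i < B) F i = \sum_(i < N) F i.
Proof.
move=> leBN F0; rewrite -(subnKC leBN) big_split_ord /= [X in _ + X]big1 ?addn0 //.
by move=> i _; apply: F0; rewrite leq_addr.
Qed.

Lemma box2_widen {B N : nat} {F} : B <= N ->
  (forall x y, (B <= x) || (B <= y) -> F x y = 0) -> box2 B F = box2 N F.
Proof.
move=> leBN F0.
rewrite /box2 -(sum_widen (F := fun x => box1 N (F x)) leBN) => [|x Bx]; last first.
  by apply: big1 => y _; apply: F0; rewrite Bx.
by apply: eq_bigr => x _; apply: sum_widen => // y By; apply: F0; rewrite By orbT.
Qed.

Lemma box3_widen {B N : nat} {F} : B <= N ->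
  (forall x y z, [|| B <= x, B <= y | B <= z] -> F x y z = 0) -> box3 B F = box3 N F.
Proof.
move=> leBN F0.
rewrite /box3 -(sum_widen (F := fun x => box2 N (F x)) leBN) => [|x Bx]; last first.
  by apply: box2_eq0 => y z; apply: F0; rewrite Bx.
by apply: eq_bigr => x _; apply: box2_widen => // y z Byz; apply: F0; rewrite Byz orbT.
Qed.

Lemma box4_widen {B N : nat} {F} : B <= N ->
  (forall x y z w, [|| B <= x, B <= y, B <= z | B <= w] -> F x y z w = 0) ->
  box4 B F = box4 N F.
Proof.
move=> leBN F0.
rewrite /box4 -(sum_widen (F := fun x => box3 N (F x)) leBN) => [|x Bx]; last first.
  by apply: box3_eq0 => y z w; apply: F0; rewrite Bx.
by apply: eq_bigr => x _; apply: box3_widen => // y z w Byzw; apply: F0; rewrite Byzw orbT.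
Qed.

Lemma box5_widen {B N : nat} {F} : B <= N ->
  (forall x y z w v, [|| B <= x, B <= y, B <= z, B <= w | B <= v] -> F x y z w v = 0) ->
  box5 B F = box5 N F.
Proof.
move=> leBN F0.
rewrite /box5 -(sum_widen (F := fun x => box4 N (F x)) leBN) => [|x Bx]; last first.
  by apply: box4_eq0 => y z w v; apply: F0; rewrite Bx.
by apply: eq_bigr => x _; apply: box4_widen => // y z w v Bs; apply: F0; rewrite Bs orbT.
Qed.

Lemma sum_peel N (F : nat -> nat) : F N = 0 ->
  \sum_(i < N) F i = F 0 + \sum_(i < N) F i.+1.
Proof.
case: N => [F0|N FN]; first by rewrite !big_ord0 F0.
by rewrite big_ord_recl big_ord_recr /= FN addn0.
Qed.

Lemma box2_peel_last N F : (forall x, F x N = 0) ->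
  box2 N F = box1 N (fun x => F x 0) + box2 N (fun x y => F x y.+1).
Proof. by move=> F0; rewrite -big_split; apply: eq_bigr => x _; apply: sum_peel. Qed.

Lemma box3_peel_last N F : (forall x y, F x y N = 0) ->
  box3 N F = box2 N (fun x y => F x y 0) + box3 N (fun x y z => F x y z.+1).
Proof. by move=> F0; rewrite -big_split; apply: eq_bigr => x _; apply: box2_peel_last. Qed.

Lemma box4_peel_last N F : (forall x y z, F x y z N = 0) ->
  box4 N F = box3 N (fun x y z => F x y z 0) + box4 N (fun x y z w => F x y z w.+1).
Proof. by move=> F0; rewrite -big_split; apply: eq_bigr => x _; apply: box3_peel_last. Qed.

Lemma box5_peel_last N F : (forall x y z w, F x y z w N = 0) ->
  box5 N F = box4 N (fun x y z w => F x y z w 0) +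
             box5 N (fun x y z w v => F x y z w v.+1).
Proof. by move=> F0; rewrite -big_split; apply: eq_bigr => x _; apply: box4_peel_last. Qed.

Lemma box3_peel_first N F : (forall y z, F N y z = 0) ->
  box3 N F = box2 N (F 0) + box3 N (fun x => F x.+1).
Proof. by move=> F0; apply: (sum_peel N (fun x => box2 N (F x))); apply: box2_eq0. Qed.

Lemma box5_peel_first N F : (forall y z w v, F N y z w v = 0) ->
  box5 N F = box4 N (F 0) + box5 N (fun x => F x.+1).
Proof. by move=> F0; apply: (sum_peel N (fun x => box4 N (F x))); apply: box4_eq0. Qed.

Lemma box4_peel_second N F : (forall x z w, F x N z w = 0) ->
  box4 N F = box3 N (fun x => F x 0) + box4 N (fun x y => F x y.+1).
Proof. by move=> F0; rewrite -big_split; apply: eq_bigr => x _; apply: box3_peel_first. Qed.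

Lemma box5_split N s :
  (forall a b c d e, [|| N <= a, N <= b, N <= c, N <= d | N <= e] -> s a b c d e = 0) ->
  box5 N s =
    box5 N (fun a b c d e => s a.+1 b c d e.+1)
  + (box4 N (fun b c d e => s 0 b c d e.+1) + box4 N (fun a b c d => s a b.+1 c d.+1 0))
  + (box3 N (fun a c d => s a.+1 0 c d 0) + box3 N (fun a b c => s a.+1 b.+1 c 0 0))
  + (box2 N (fun c d => s 0 0 c d 0) + box2 N (fun b c => s 0 b.+1 c 0 0)).
Proof.
move=> s0.
rewrite box5_peel_last => [|*]; last by apply: s0; lia.
rewrite (box5_peel_first N (fun a b c d e => s a b c d e.+1)) => [|*]; last by apply: s0; lia.
rewrite box4_peel_second => [|*]; last by apply: s0; lia.
rewrite (box3_peel_first N (fun a c d => s a 0 c d 0)) => [|*]; last by apply: s0; lia.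
rewrite (box4_peel_last N (fun a b c d => s a b.+1 c d 0)) => [|*]; last by apply: s0; lia.
rewrite (box3_peel_first N (fun a b c => s a b.+1 c 0 0)) => [|*]; last by apply: s0; lia.
lia.
Qed.

End BoxSums.

Lemma cardS_box (m1 m2 n1 : int) N : (bnd m1 m2 n1 <= N)%N ->
  cardS m1 m2 n1 = box5 N (fun a b c d e => inS m1 m2 n1 a b c d e 0).
Proof.
move=> leBN; rewrite -(box5_widen leBN) => [|a b c d e out]; last first.
  by move: out; rewrite /inS /bnd; lia.
apply: (eq_box5 (bnd m1 m2 n1)
  (fun a b c d e => \sum_(f < bnd m1 m2 n1) inS m1 m2 n1 a b c d e f)%N) => a b c d e.
rewrite /bnd addn1 big_ord_recl big1 ?addn0 // => f _.
by rewrite /inS /= /bump /=; lia.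
Qed.

Lemma cardR1_box (m1 m2 n1 : int) N : (bnd m1 m2 n1 <= N)%N ->
  cardR1 m1 m2 n1 = box4 N (fun b c d e => inR1 m1 m2 n1 b c d e).
Proof. by move=> leBN; apply: box4_widen => // b c d e; rewrite /inR1 /bnd; lia. Qed.

Lemma cardR2_box (m1 m2 n1 : int) N : (bnd m1 m2 n1 <= N)%N ->
  cardR2 m1 m2 n1 = box4 N (fun a b c d => inR2 m1 m2 n1 a b c d).
Proof. by move=> leBN; apply: box4_widen => // a b c d; rewrite /inR2 /bnd; lia. Qed.

Lemma cardQ1_box (m1 m2 n1 : int) N : (bnd m1 m2 n1 <= N)%N ->
  cardQ1 m1 m2 n1 = box3 N (fun a c d => inQ1 m1 m2 n1 a c d).
Proof. by move=> leBN; apply: box3_widen => // a c d; rewrite /inQ1 /bnd; lia. Qed.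

Lemma cardQ2_box (m1 m2 n1 : int) N : (bnd m1 m2 n1 <= N)%N ->
  cardQ2 m1 m2 n1 = box3 N (fun a b c => inQ2 m1 m2 n1 a b c).
Proof. by move=> leBN; apply: box3_widen => // a b c; rewrite /inQ2 /bnd; lia. Qed.

(* Qualified name: finset already has a lemma called cardU1. *)
Lemma cardU1_box (m1 m2 n1 : int) N : (bnd m1 m2 n1 <= N)%N ->
  Defs.cardU1 m1 m2 n1 = box2 N (fun c d => inU1 m1 m2 n1 c d).
Proof. by move=> leBN; apply: box2_widen => // c d; rewrite /inU1 /bnd; lia. Qed.

Lemma cardU2_box (m1 m2 n1 : int) N : (bnd m1 m2 n1 <= N)%N ->
  cardU2 m1 m2 n1 = box2 N (fun b c => inU2 m1 m2 n1 b c).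
Proof. by move=> leBN; apply: box2_widen => // b c; rewrite /inU2 /bnd; lia. Qed.

Lemma inS_shift (m1 m2 n1 : int) a b c d e :
  inS m1 m2 n1 a.+1 b c d e.+1 0 = inS (m1 - 1) m2 (n1 - 1) a b c d e 0.
Proof. by rewrite /inS; lia. Qed.

Lemma inS_R1 (m1 m2 n1 : int) b c d e : 0 <= m1 -> 0 <= n1 ->
  inS m1 m2 n1 0 b c d e.+1 0 = inR1 (m1 + 1) (m2 - 1) (n1 - 1) b c d e.
Proof. by rewrite /inS /inR1; lia. Qed.

Lemma inS_R2 (m1 m2 n1 : int) a b c d :
  inS m1 m2 n1 a b.+1 c d.+1 0 0 = inR2 (m1 + 1) (m2 - 1) (n1 - 1) a b c d.
Proof. by rewrite /inS /inR2; lia. Qed.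

Lemma inS_Q1 (m1 m2 n1 : int) a c d : 0 <= m2 ->
  inS m1 m2 n1 a.+1 0 c d 0 0 = inQ1 (m1 - 1) m2 (n1 - 1) a c d.
Proof. by rewrite /inS /inQ1; lia. Qed.

Lemma inS_Q2 (m1 m2 n1 : int) a b c :
  inS m1 m2 n1 a.+1 b.+1 c 0 0 0 = inQ2 (m1 - 1) m2 (n1 - 1) a b c.
Proof. by rewrite /inS /inQ2; lia. Qed.

Lemma inS_U1 (m1 m2 n1 : int) c d : 0 <= m1 -> 0 <= m2 -> 0 <= n1 ->
  inS m1 m2 n1 0 0 c d 0 0 = inU1 m1 m2 n1 c d.
Proof. by rewrite /inS /inU1; lia. Qed.

Lemma inS_U2 (m1 m2 n1 : int) b c : 0 <= m1 -> 0 <= n1 ->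
  inS m1 m2 n1 0 b.+1 c 0 0 0 = inU2 m1 m2 n1 b c.
Proof. by rewrite /inS /inU2; lia. Qed.

Theorem lemma6p5 (m1 m2 n1 : nat) :
  cardS m1%:Z m2%:Z n1%:Z =
  (cardS (m1%:Z - 1) m2%:Z (n1%:Z - 1)
   + card1S (m1%:Z + 1) (m2%:Z - 1) (n1%:Z - 1)
   + card2S (m1%:Z - 1) m2%:Z (n1%:Z - 1)
   + card3S m1%:Z m2%:Z n1%:Z)%N.
Proof.
pose N := (m1 + m2 + n1 + 4)%N.
rewrite /card1S /card2S /card3S (cardS_box _ _ _ N) ?(cardS_box (m1%:Z - 1) _ _ N)
  ?(cardR1_box _ _ _ N) ?(cardR2_box _ _ _ N) ?(cardQ1_box _ _ _ N)
  ?(cardQ2_box _ _ _ N) ?(cardU1_box _ _ _ N) ?(cardU2_box _ _ _ N);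
  try by rewrite /bnd /N; lia.
rewrite box5_split => [|a b c d e]; last by rewrite /inS /N; lia.
congr (_ + (_ + _) + (_ + _) + (_ + _)).
- by apply: eq_box5 => a b c d e; rewrite inS_shift.
- by apply: eq_box4 => b c d e; rewrite inS_R1.
- by apply: eq_box4 => a b c d; rewrite inS_R2.
- by apply: eq_box3 => a c d; rewrite inS_Q1.
- by apply: eq_box3 => a b c; rewrite inS_Q2.
- by apply: eq_box2 => c d; rewrite inS_U1.
- by apply: eq_box2 => b c; rewrite inS_U2.
Qed.
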